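(* Let $0<p<q$ be relatively prime integers and let $\mathcal{G}$ be the Markov snake graph of slope $p/q$. Then $\mathcal{G}$ has a rotational symmetry at its center tile. Moreover: (1) $\mathcal{G}$ has exactly $p$ horizontal segments, and there are positive integers $\nu_1,\dots,\nu_p$ with $|\nu_i-\nu_j|\le1$ for all $i\ne j$ such that the $i$-th horizontal segment has exactly $2(\nu_i-1)+3$ tiles; (2) $\mathcal{G}$ has exactly $p-1$ vertical segments, each of which has exactly $3$ tiles.
   Context: A tile is a unit square in the plane with sides parallel to the axes, viewed as a graph with 4 vertices and 4 edges. A snake graph with $d\ge1$ tiles is the union of tiles $G_1,\dots,G_d$ with each $G_{i+1}$ the translate of $G_i$ by $(0,1)$ or $(1,0)$, so that $G_i,G_{i+1}$ share exactly one edge $e_i$. A sign function on a snake graph is a map $f$ from edges to $\{+,-\}$ such that in each tile the north and west edges have the same sign, the south and east edges have the same sign, and north and south edges have opposite signs. For positive integers $a_1,\dots,a_n$ with $d=a_1+\dots+a_n-1\ge1$, $\mathcal{G}[a_1,\dots,a_n]$ is the unique snake graph with tiles $G_1,\dots,G_d$ admitting a sign function $f$ and an edge $e_d\in\{\text{north edge of }G_d,\text{east edge of }G_d\}$ such that, with $e_0$ the south edge of $G_1$, the sequence $(f(e_0),\dots,f(e_d))$ consists of $a_1$ copies of a sign $s$, then $a_2$ copies of $-s$, then $a_3$ copies of $s$, etc. For relatively prime integers $0<p<q$ put $v_i=\lfloor iq/p\rfloor-\lfloor (i-1)q/p\rfloor$ for $1\le i\le p-1$ and $v_p=q-1-\lfloor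 (p-1)q/p\rfloor$. The Markov snake graph of slope $p/q$ is $\mathcal{G}[c]$, where $c$ is the sequence $2,\,1^{2(v_1-1)},\,2,2,\,1^{2(v_2-1)},\,2,2,\dots,2,2,\,1^{2(v_p-1)},\,2$ ($1^k$ denotes $k$ consecutive entries equal to 1). A snake graph has a rotational symmetry at its center tile if some tile $G_i$ is such that rotation by $180^\circ$ about the center of $G_i$ maps the graph onto itself. A horizontal (resp. vertical) segment is a maximal run $G_j,G_{j+1},\dots,G_k$ of at least two consecutive tiles such that each $G_{l+1}$ ($j\le l<k$) is east (resp. north) of $G_l$; segments are ordered along the snake graph. *)

From mathcomp Require Import all_boot all_algebra.
Set Implicit Arguments. Unset Strict Implicit. Unset Printing Implicit Defensive.
Import GRing.Theory Num.Theory.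

(* A snake graph with d tiles G_1,...,G_d is encoded, up to
   translation, by its list of moves  dirs : seq bool  of size d-1:
   the (l+1)-th entry (0-based index l) is [true] if G_{l+2} is the translate
   of G_{l+1} by (0,1) (north) and [false] if by (1,0) (east).
   INTERNALLY TILES ARE INDEXED 0-BASED: tile i (0 <= i < d) is G_{i+1}.
   Tile i is the unit square with lower-left corner [pos dirs i]. *)

Inductive edge : Type :=
| Hedge of int & int   (* unit segment from (x,y) to (x+1,y) *)
| Vedge of int & int.  (* unit segment from (x,y) to (x,y+1) *)

Definition ntiles (dirs : seq bool) : nat := (size dirs).+1.

Definition pos (dirs : seq bool) (i : nat) : int * int :=
  (Posz (count negb (take i dirs)), Posz (count id (take i dirs))).

Definition south (c : int * int) : edge := Hedge c.1 c.2.
Definition north (c : int * int) : edge := Hedge c.1 (c.2 + 1)%R.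
Definition west  (c : int * int) : edge := Vedge c.1 c.2.
Definition east  (c : int * int) : edge := Vedge (c.1 + 1)%R c.2.

Definition in_graph (dirs : seq bool) (e : edge) : Prop :=
  exists2 i, i < ntiles dirs &
    let c := pos dirs i in
    e = south c \/ e = north c \/ e = west c \/ e = east c.

(* sign functions, with signs encoded as bool (true = +) *)
Definition is_sign_function (dirs : seq bool) (f : edge -> bool) : Prop :=
  forall i, i < ntiles dirs ->
    let c := pos dirs i in
    [/\ f (north c) = f (west c), f (south c) = f (east c)
      & f (north c) != f (south c)].

(* the distinguished edges e_0, ..., e_d  (lastN selects e_d:
   true = north edge of G_d, false = east edge of G_d) *)
Definition dist_edge (dirs : seq bool) (lastN : bool) (i : nat) : edge :=
  if i == 0 then south (pos dirs 0)
  else if i < ntiles dirs then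
    (if nth false dirs i.-1 then north (pos dirs i.-1) else east (pos dirs i.-1))
  else (if lastN then north (pos dirs i.-1) else east (pos dirs i.-1)).

Fixpoint alt_signs (s : bool) (a : seq nat) : seq bool :=
  if a is x :: r then nseq x s ++ alt_signs (~~ s) r else [::].

Definition is_snakeG (a : seq nat) (dirs : seq bool) : Prop :=
  let d := (sumn a).-1 in
  [/\ all (fun x => 0 < x) a, 1 <= d, ntiles dirs = d &
    exists (f : edge -> bool) (lastN : bool) (s : bool),
      is_sign_function dirs f /\
      [seq f (dist_edge dirs lastN i) | i <- iota 0 d.+1] = alt_signs s a].

Definition markov_v (p q i : nat) : nat :=
  if i < p then i * q %/ p - i.-1 * q %/ p
  else q - 1 - (p - 1) * q %/ p.

Definition markov_cf (p q : nat) : seq nat :=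
  2 :: flatten [seq nseq (2 * (markov_v p q i - 1)) 1 ++
                   (if i == p then [:: 2] else [:: 2; 2]) | i <- iota 1 p].

(* 180 degree rotation about the center (x0+1/2, y0+1/2) of the tile with
   lower-left corner (x0,y0); the point (x,y) goes to (2x0+1-x, 2y0+1-y). *)
Definition rot_edge (c : int * int) (e : edge) : edge :=
  match e with
  | Hedge x y => Hedge (2 * c.1 - x)%R (2 * c.2 + 1 - y)%R
  | Vedge x y => Vedge (2 * c.1 + 1 - x)%R (2 * c.2 - y)%R
  end.

Definition rot_symmetric_at_tile (dirs : seq bool) : Prop :=
  exists2 i, i < ntiles dirs &
    forall e, in_graph dirs e <-> in_graph dirs (rot_edge (pos dirs i) e).

(* Segments.  (j,k) with j < k < ntiles (0-based tiles) is a segment in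
   direction b (false = horizontal/east, true = vertical/north) if every move
   from tile l to l+1 (j <= l < k) is in direction b, and the run is maximal. *)
Definition is_segment (b : bool) (dirs : seq bool) (jk : nat * nat) : bool :=
  let: (j, k) := jk in
  [&& j < k, k < ntiles dirs,
      all (fun l => nth false dirs l == b) (index_iota j k),
      (j == 0) || (nth false dirs j.-1 != b) &
      (k == size dirs) || (nth false dirs k != b)].

Definition segments (b : bool) (dirs : seq bool) : seq (nat * nat) :=
  [seq jk <- [seq (j, k) | j <- iota 0 (ntiles dirs), k <- iota 0 (ntiles dirs)]
   | is_segment b dirs jk].

Definition hsegments := segments false.
Definition vsegments := segments true.

Definition seg_tiles (jk : nat * nat) : nat := jk.2 - jk.1 + 1.

(* Along a snake graph, the sign of the distinguished edge e_i differs from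
   that of e_0 by the parity of i, plus one when e_i is vertical.  Hence the
   sign sequence 2, 1^(2(v_1-1)), 2, 2, ..., 2 determines the snake graph: its
   moves are east^(2 v_1) north^2 east^(2 v_2) ... north^2 east^(2 v_p), and
   the checkerboard sign function shows that it exists.  The widths v_i are
   differences of consecutive values of floor(iq/p), so they differ by at most
   one, and they form a palindrome because floor(iq/p) + floor((p-i)q/p) = q-1
   for 0 < i < p.  A palindromic move sequence of even length is invariant
   under the half-turn about its middle tile. *)

From mathcomp Require Import all_boot all_algebra zify.
Set Implicit Arguments. Unset Strict Implicit. Unset Printing Implicit Defensive.

Lemma posS dirs i : i < size dirs ->
  pos dirs i.+1 = if nth false dirs i then ((pos dirs i).1, (pos dirs i).2 + 1)%R
                  else ((pos dirs i).1 + 1, (pos dirs i).2)%R.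
Proof.
move=> lt_i; rewrite /pos (take_nth false lt_i) -cats1 !count_cat /=.
by case: (nth false dirs i) => /=; congr pair; lia.
Qed.

(* Entry i is true iff the distinguished edge e_i is horizontal. *)
Definition horiz_edges (dirs : seq bool) (lastN : bool) : seq bool :=
  true :: rcons dirs lastN.

Lemma size_horiz_edges dirs lastN : size (horiz_edges dirs lastN) = (ntiles dirs).+1.
Proof. by rewrite /= size_rcons. Qed.

Lemma dist_edge_in dirs lastN i : i < ntiles dirs ->
  dist_edge dirs lastN i =
    if nth false (horiz_edges dirs lastN) i then south (pos dirs i) else west (pos dirs i).
Proof.
case: i => [|i] // lt_i; rewrite /dist_edge /= lt_i nth_rcons (lt_i : i < size dirs).
by rewrite posS //; case: (nth false dirs i).
Qed.

Lemma dist_edge_out dirs lastN i : i < ntiles dirs ->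
  dist_edge dirs lastN i.+1 =
    if nth false (horiz_edges dirs lastN) i.+1 then north (pos dirs i) else east (pos dirs i).
Proof.
rewrite /dist_edge /= nth_rcons /ntiles !ltnS => le_i.
case: ltnP => // ge_i; have -> : i = size dirs by lia.
by rewrite eqxx.
Qed.

(* In a tile, the exit edge has the sign of the entry edge iff exactly one of
   the two is horizontal. *)
Lemma sign_dist_edge dirs lastN f : is_sign_function dirs f ->
  forall i, i <= ntiles dirs ->
  f (dist_edge dirs lastN i) =
    f (dist_edge dirs lastN 0) (+) odd i (+) ~~ nth false (horiz_edges dirs lastN) i.
Proof.
move=> sign_f; elim=> [|i IHi] lt_i; first by rewrite /= !addbF.
have [fNW fSE fNS] := sign_f i lt_i.
move: (IHi (ltnW lt_i)); rewrite (dist_edge_in lastN lt_i) (dist_edge_out lastN lt_i).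
case: (nth _ _ i.+1); case: (nth _ _ i) => /=; move: fNW fSE fNS;
move: (f (north _)) (f (south _)) (f (west _)) (f (east _)) (f (dist_edge _ _ 0)) (odd i);
by do 6 case.
Qed.

Definition checker_sign (e : edge) : bool :=
  match e with
  | Hedge x y => odd (absz x + absz y)
  | Vedge x y => ~~ odd (absz x + absz y)
  end.

Lemma checker_sign_is_sign_function dirs : is_sign_function dirs checker_sign.
Proof.
move=> i _; rewrite /pos /north /south /west /east /=.
by rewrite addnA addn1 addnAC addn1 /=; split => //; case: (odd _).
Qed.

Fixpoint horiz_pattern (b : bool) (a : seq nat) : seq bool :=
  if a is x :: a' then [seq b (+) odd i | i <- iota 0 x] ++ horiz_pattern (b (+) ~~ odd x) a'
  else [::].

Lemma size_alt_signs s a : size (alt_signs s a) = sumn a.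
Proof. by elim: a s => [|x a IHa] s //=; rewrite size_cat size_nseq IHa. Qed.

Lemma size_horiz_pattern b a : size (horiz_pattern b a) = sumn a.
Proof. by elim: a b => [|x a IHa] b //=; rewrite size_cat size_map size_iota IHa. Qed.

Lemma horiz_pattern_alt_signs a s t :
  [seq ~~ (nth false (alt_signs s a) i (+) odd i (+) t) | i <- iota 0 (sumn a)] =
  horiz_pattern (~~ (s (+) t)) a.
Proof.
elim: a s t => [|x a IHa] s t //=.
rewrite iotaD map_cat add0n; congr cat.
  apply/eq_in_map => i; rewrite mem_iota add0n => /andP [_ lt_ix].
  by rewrite nth_cat size_nseq lt_ix nth_nseq lt_ix; case: s; case: t; case: (odd i).
have -> : ~~ (s (+) t) (+) ~~ odd x = ~~ (~~ s (+) (t (+) odd x)).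
  by case: s; case: t; case: (odd x).
rewrite -IHa -[x in iota x _]addn0 iotaDl -map_comp; apply: eq_map => j /=.
rewrite nth_cat size_nseq ltnNge leq_addr /= addKn oddD.
by case: s; case: t; case: (odd x); case: (odd j); case: (nth _ _ _).
Qed.

Lemma snakeG_horiz_edges a dirs : is_snakeG a dirs ->
  exists lastN, horiz_edges dirs lastN = horiz_pattern true a.
Proof.
case=> a_gt0 d_ge1 ntiles_dirs [f [lastN [s [sign_f signs_f]]]]; exists lastN.
have sumn_a : sumn a = (ntiles dirs).+1 by rewrite ntiles_dirs; lia.
have f_dist i : i <= ntiles dirs -> f (dist_edge dirs lastN i) = nth false (alt_signs s a) i.
  by move=> le_i; rewrite -signs_f (nth_map 0) ?size_iota ?nth_iota -?ntiles_dirs.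
have f_e0 : f (dist_edge dirs lastN 0) = s.
  by rewrite f_dist //; case: a a_gt0 sumn_a {signs_f f_dist ntiles_dirs d_ge1} => [|[|x] a].
have := horiz_pattern_alt_signs a s s; rewrite addbb => <-.
apply: (@eq_from_nth _ false) => [|i]; first by rewrite size_map size_iota sumn_a size_horiz_edges.
rewrite size_horiz_edges => lt_i.
rewrite (nth_map 0) ?size_iota ?nth_iota ?sumn_a // add0n -f_dist //.
rewrite (sign_dist_edge lastN sign_f lt_i) f_e0.
by case: (nth _ _ _); case: (odd i); case: (s).
Qed.

Lemma horiz_is_snakeG a dirs lastN : all (fun x => 0 < x) a -> 1 <= (sumn a).-1 ->
  horiz_edges dirs lastN = horiz_pattern true a -> is_snakeG a dirs.
Proof.
move=> a_gt0 d_ge1 horiz_dirs.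
have sumn_a : sumn a = (ntiles dirs).+1.
  by rewrite -(size_horiz_edges dirs lastN) horiz_dirs size_horiz_pattern.
rewrite /is_snakeG sumn_a in d_ge1 *; split=> //.
exists checker_sign, lastN, false; split; first exact: checker_sign_is_sign_function.
apply: (@eq_from_nth _ false) => [|i]; first by rewrite size_map size_iota size_alt_signs sumn_a.
rewrite size_map size_iota => lt_i.
rewrite (nth_map 0) ?size_iota // nth_iota // add0n.
rewrite (sign_dist_edge lastN (@checker_sign_is_sign_function dirs)) //.
rewrite horiz_dirs -(horiz_pattern_alt_signs a false false) (nth_map 0) ?size_iota ?sumn_a //.
rewrite nth_iota ?sumn_a // add0n /dist_edge /= /pos take0 /=.
by case: (nth _ _ _); case: (odd i).
Qed.

Definition psum (rs : seq nat) (m : nat) : nat := sumn (take m rs).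

Lemma psum0 rs : psum rs 0 = 0.
Proof. by rewrite /psum take0. Qed.

Lemma psum_cons r rs m : psum (r :: rs) m.+1 = r + psum rs m.
Proof. by []. Qed.

Lemma psumS rs m : m < size rs -> psum rs m.+1 = psum rs m + nth 0 rs m.
Proof. by move=> lt_m; rewrite /psum (take_nth 0 lt_m) -cats1 sumn_cat /= addn0. Qed.

Lemma psum_oversize rs m : size rs <= m -> psum rs m = sumn rs.
Proof. by move=> le_m; rewrite /psum take_oversize. Qed.

Lemma leq_psum rs m n : m <= n -> psum rs m <= psum rs n.
Proof. by move=> le_mn; rewrite /psum -(subnKC le_mn) takeD sumn_cat leq_addr. Qed.

Lemma psum_leq_sumn rs m : psum rs m <= sumn rs.
Proof. by rewrite /psum -{2}(cat_take_drop m rs) sumn_cat leq_addr. Qed.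

Lemma ltn_psum rs m n : all (fun x => 0 < x) rs -> m < n -> m < size rs ->
  psum rs m < psum rs n.
Proof.
move=> rs_gt0 lt_mn lt_m; have := leq_psum rs lt_mn; rewrite psumS //.
by have /= := allP rs_gt0 _ (mem_nth 0 lt_m); lia.
Qed.

Lemma psum_cover rs l : l < sumn rs -> exists2 m, m < size rs & psum rs m <= l < psum rs m.+1.
Proof.
elim: rs l => [|r rs IHrs] l //= lt_l; case: (ltnP l r) => [lt_lr | le_rl].
  by exists 0 => //; rewrite psum_cons !psum0 addn0.
have [m lt_m run_m] := IHrs (l - r) ltac:(lia).
by exists m.+1 => //; rewrite !psum_cons; lia.
Qed.

Lemma nth_alt_signs b rs m l : m < size rs -> psum rs m <= l < psum rs m.+1 ->
  nth false (alt_signs b rs) l = b (+) odd m.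
Proof.
elim: rs b m l => [|r rs IHrs] b [|m] l // lt_m.
  rewrite psum0 psum_cons psum0 addn0 => /andP [_ lt_lr] /=.
  by rewrite nth_cat size_nseq lt_lr nth_nseq lt_lr addbF.
rewrite !psum_cons => /andP [le_l lt_l] /=.
rewrite nth_cat size_nseq ltnNge (leq_trans (leq_addr _ _) le_l) /=.
by rewrite (IHrs _ m) //; [case: b; case: (odd m) | lia].
Qed.

Section RunSegments.

Variables (b0 : bool) (rs : seq nat).
Hypothesis rs_gt0 : all (fun x => 0 < x) rs.

Local Notation dirs := (alt_signs b0 rs).

Lemma nth_runs_gt0 m : m < size rs -> 0 < nth 0 rs m.
Proof. by move=> lt_m; apply: (allP rs_gt0); apply: mem_nth. Qed.

Lemma nth_run_first m : m < size rs -> nth false dirs (psum rs m) = b0 (+) odd m.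
Proof.
move=> lt_m; apply: nth_alt_signs => //.
by rewrite psumS // leqnn -addn1 leq_add2l nth_runs_gt0.
Qed.

Lemma nth_run_last m : m < size rs -> nth false dirs (psum rs m.+1).-1 = b0 (+) odd m.
Proof.
move=> lt_m; apply: nth_alt_signs => //.
by have := nth_runs_gt0 lt_m; rewrite psumS //; lia.
Qed.

Lemma run_is_segment m : m < size rs ->
  is_segment (b0 (+) odd m) dirs (psum rs m, psum rs m.+1).
Proof.
move=> lt_m; have := nth_runs_gt0 lt_m; have := psumS lt_m => psum_m1 r_gt0.
rewrite /is_segment /ntiles size_alt_signs; apply/and5P; split.
- lia.
- by have := psum_leq_sumn rs m.+1; lia.
- apply/allP => l; rewrite mem_index_iota => run_l.
  by rewrite (nth_alt_signs b0 lt_m run_l).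
- case: m lt_m {r_gt0 psum_m1} => [|m] lt_m; first by rewrite psum0.
  by rewrite nth_run_last 1?ltnW //= addbN; case: (_ (+) _); rewrite orbT.
- case: (ltnP m.+1 (size rs)) => [lt_m1 | ge_m1]; last by rewrite psum_oversize ?eqxx.
  by rewrite nth_run_first //= addbN; case: (_ (+) _); rewrite orbT.
Qed.

Lemma segment_is_run b j k : is_segment b dirs (j, k) ->
  exists2 m, m < size rs & [/\ b0 (+) odd m = b, j = psum rs m & k = psum rs m.+1].
Proof.
rewrite /is_segment /ntiles size_alt_signs => /and5P [lt_jk le_k all_b first_j last_k].
have dirs_b l : j <= l < k -> nth false dirs l = b.
  by move=> run_l; apply/eqP/(allP all_b); rewrite mem_index_iota.
have [m lt_m run_j] := @psum_cover rs j ltac:(lia).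
have dir_m : b0 (+) odd m = b by rewrite -(nth_alt_signs b0 lt_m run_j) dirs_b ?leqnn.
exists m => //; split => //.
- case: (ltnP (psum rs m) j) => [lt_mj|]; last by lia.
  move: first_j; rewrite (nth_alt_signs b0 lt_m (l := j.-1)); last by lia.
  by rewrite dir_m eqxx orbF; lia.
- case: (ltngtP k (psum rs m.+1)) => // [lt_k | gt_k].
    have ne_k : k != sumn rs by have := psum_leq_sumn rs m.+1; lia.
    by move: last_k; rewrite (negbTE ne_k) (nth_alt_signs b0 lt_m (l := k)) ?dir_m ?eqxx //; lia.
  have lt_m1 : m.+1 < size rs.
    by rewrite ltnNge; apply/negP => /psum_oversize; have := psum_leq_sumn rs k; lia.
  have := dirs_b (psum rs m.+1) ltac:(lia).
  by rewrite nth_run_first //= addbN dir_m; case: (b).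
Qed.

Definition run_segments (b : bool) : seq (nat * nat) :=
  [seq (psum rs m, psum rs m.+1) | m <- iota 0 (size rs) & b0 (+) odd m == b].

Lemma perm_segments_alt_signs b : perm_eq (segments b dirs) (run_segments b).
Proof.
apply: uniq_perm.
- by apply/filter_uniq/allpairs_uniq => [||[? ?] [? ?]]; rewrite ?iota_uniq.
- rewrite map_inj_in_uniq ?filter_uniq ?iota_uniq // => m n.
  rewrite !mem_filter !mem_iota !add0n => /andP [_ lt_m] /andP [_ lt_n] [eq_mn _].
  apply/eqP; rewrite eqn_leq; apply/andP; split; rewrite leqNgt; apply/negP => lt_nm.
    by have := ltn_psum rs_gt0 lt_nm lt_n; rewrite eq_mn ltnn.
  by have := ltn_psum rs_gt0 lt_nm lt_m; rewrite eq_mn ltnn.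
move=> [j k]; rewrite mem_filter; apply/andP/mapP => [[] | [m]].
  case/segment_is_run=> m lt_m [<- -> ->] _.
  by exists m; rewrite // mem_filter eqxx mem_iota.
rewrite mem_filter mem_iota => /andP [/eqP <- lt_m] [-> ->].
have seg_m := run_is_segment lt_m; split=> //.
move: (seg_m); rewrite /is_segment /ntiles => /and5P [lt_jk lt_k _ _ _].
by apply/allpairsPdep; exists (psum rs m), (psum rs m.+1); rewrite !mem_iota; split=> //; lia.
Qed.

End RunSegments.

Lemma alt_signs_cat b s1 s2 :
  alt_signs b (s1 ++ s2) = alt_signs b s1 ++ alt_signs (b (+) odd (size s1)) s2.
Proof.
elim: s1 b => [|r s1 IHs1] b /=; first by rewrite addbF.
by rewrite IHs1 -catA; congr (_ ++ (_ ++ alt_signs _ _)); case: b; case: (odd _).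
Qed.

Lemma rev_alt_signs b rs : rev (alt_signs b rs) = alt_signs (b (+) ~~ odd (size rs)) (rev rs).
Proof.
elim: rs b => [|r rs IHrs] b //=.
rewrite rev_cat IHrs rev_cons -cats1 alt_signs_cat size_rev /= cats0 rev_nseq.
by congr (_ ++ nseq _ _); case: b; case: (odd _).
Qed.

Lemma count_take_pal (T : Type) (P : pred T) (s : seq T) i : rev s = s -> i <= size s ->
  count P (take (size s - i) s) + count P (take i s) = count P s.
Proof.
move=> pal_s le_i.
have -> : take (size s - i) s = rev (drop i s).
  by rewrite -{2}pal_s take_rev subKn.
by rewrite count_rev addnC -count_cat cat_take_drop.
Qed.

Lemma pos_pal dirs i : rev dirs = dirs -> i <= size dirs ->
  pos dirs (size dirs - i) =
    ((pos dirs (size dirs)).1 - (pos dirs i).1, (pos dirs (size dirs)).2 - (pos dirs i).2)%R.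
Proof.
move=> pal_dirs le_i; rewrite /pos /= take_size.
have := count_take_pal negb pal_dirs le_i; have := count_take_pal id pal_dirs le_i.
by move=> ? ?; congr pair; lia.
Qed.

Lemma rot_edgeK c : involutive (rot_edge c).
Proof. by case=> x y /=; [congr Hedge | congr Vedge]; lia. Qed.

(* The half-turn about the middle tile maps tile i onto tile (size dirs - i). *)
Lemma pal_rot_symmetric dirs : rev dirs = dirs -> ~~ odd (size dirs) ->
  rot_symmetric_at_tile dirs.
Proof.
move=> pal_dirs even_dirs; set h := (size dirs)./2.
have size_2h : size dirs = h + h.
  by rewrite -[LHS]odd_double_half (negbTE even_dirs) add0n addnn.
have pos_end : pos dirs (size dirs) = (2 * (pos dirs h).1, 2 * (pos dirs h).2)%R.
  have le_h : h <= size dirs by rewrite size_2h leq_addr.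
  have := pos_pal pal_dirs le_h; rewrite {1}size_2h addnK.
  case: (pos dirs h) => a b; case: (pos dirs (size dirs)) => x y [ha hb].
  by congr pair; rewrite /=; lia.
have rot_in e : in_graph dirs e -> in_graph dirs (rot_edge (pos dirs h) e).
  case=> i lt_i edge_i; have le_i : i <= size dirs by [].
  exists (size dirs - i); first by rewrite /ntiles ltnS leq_subr.
  move: edge_i; rewrite pos_pal // pos_end /south /north /west /east.
  case: (pos dirs i) (pos dirs h) => [a b] [x y] /=.
  case=> [->|[->|[->|->]]] /=.
  - by right; left; congr Hedge; lia.
  - by left; congr Hedge; lia.
  - by right; right; right; congr Vedge; lia.
  - by right; right; left; congr Vedge; lia.
exists h; first by rewrite /ntiles ltnS size_2h leq_addr.
by move=> e; split=> [|/rot_in]; [apply: rot_in | rewrite rot_edgeK].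
Qed.

Lemma divn_add_compl d n m : ~~ (d %| m) -> m <= d * n -> m %/ d + (d * n - m) %/ d = n.-1.
Proof.
move=> ndvd_m le_m.
have d_gt0 : 0 < d by case: d ndvd_m le_m => //; rewrite dvd0n mul0n leqn0 => /negbTE ->.
have r_gt0 : 0 < m %% d by rewrite lt0n.
have lt_m : m %/ d < n.
  rewrite ltn_divLR // mulnC ltn_neqAle le_m andbT.
  by apply: contraNneq ndvd_m => ->; rewrite dvdn_mulr.
by rewrite divnB // mulKn // modnMr r_gt0 /=; move: (m %/ d) lt_m => k; lia.
Qed.

(* Defined as q - 1 rather than q at i = p, so that every v_i, including
   v_p, is a difference of consecutive values. *)
Definition markov_floor (p q i : nat) : nat := if i < p then i * q %/ p else q - 1.

Lemma markov_vE p q i : 0 < i <= p ->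
  markov_v p q i = markov_floor p q i - markov_floor p q i.-1.
Proof.
case/andP=> i_gt0 le_ip; rewrite /markov_v /markov_floor (_ : i.-1 < p); last by lia.
case: ltnP => // ge_ip; have -> : i = p by lia.
by rewrite !subn1.
Qed.

Section MarkovWidths.

Variables p q : nat.
Hypotheses (p_gt0 : 0 < p) (p_lt_q : p < q) (coprime_pq : coprime p q).

Lemma coprime_ndvdn i : 0 < i < p -> ~~ (p %| i * q).
Proof. by case/andP=> i_gt0 lt_ip; rewrite mulnC Gauss_dvdr // gtnNdvd. Qed.

Lemma markov_floor_compl i : i <= p -> markov_floor p q i + markov_floor p q (p - i) = q - 1.
Proof.
rewrite /markov_floor; case: (posnP i) => [-> _ | i_gt0 le_ip].
  by rewrite p_gt0 subn0 ltnn mul0n div0n.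
case: (ltngtP i p) le_ip => // [lt_ip _ | -> _]; last first.
  by rewrite subnn p_gt0 mul0n div0n addn0.
rewrite (_ : p - i < p); last by lia.
rewrite mulnBl divn_add_compl ?subn1 //.
  by apply: coprime_ndvdn; rewrite i_gt0.
by rewrite leq_mul2r ltnW ?orbT.
Qed.

Lemma markov_v_sym i : 0 < i <= p -> markov_v p q (p.+1 - i) = markov_v p q i.
Proof.
case/andP=> i_gt0 le_ip; rewrite !markov_vE ?i_gt0 //; last by lia.
have := markov_floor_compl le_ip; have := markov_floor_compl (leq_trans (leq_pred i) le_ip).
have -> : (p.+1 - i).-1 = p - i by lia.
have -> : p.+1 - i = p - i.-1 by lia.
lia.
Qed.

Lemma markov_v_bounds i : 0 < i <= p -> (q - 1) %/ p <= markov_v p q i <= (q - 1) %/ p + 1.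
Proof.
have inner_bounds j : 0 < j < p -> (q - 1) %/ p <= markov_v p q j <= (q - 1) %/ p + 1.
  case/andP=> j_gt0 lt_jp.
  have ndvd_q : ~~ (p %| q) by have := coprime_ndvdn (i := 1); rewrite mul1n; apply; lia.
  rewrite /markov_v lt_jp subn1 divn_pred (negbTE ndvd_q) subn0.
  have := divnD (j.-1 * q) q p_gt0; rewrite -mulSnr prednK //.
  by case: (_ <= _) => /= ->; lia.
case/andP=> i_gt0 le_ip; case: (ltnP i p) => [lt_ip | ge_ip].
  by apply: inner_bounds; rewrite i_gt0.
have -> : i = p by lia.
case: (ltnP 1 p) => [lt_1p | le_p1].
  have := markov_v_sym (i := 1); rewrite subn1 /= => -> //.
  by apply: inner_bounds; rewrite lt_1p.
have p1 : p = 1 by lia.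
by rewrite p1 /markov_v ltnn !divn1 mul0n subn0 addn1 leqnn leqnSn.
Qed.

Lemma markov_v_gt0 i : 0 < i <= p -> 0 < markov_v p q i.
Proof.
move=> /markov_v_bounds /andP [+ _]; apply: leq_trans.
by rewrite divn_gt0 //; lia.
Qed.

End MarkovWidths.

Fixpoint cf_blocks (v : nat) (vs : seq nat) : seq nat :=
  if vs is u :: vs' then nseq (2 * (v - 1)) 1 ++ [:: 2; 2] ++ cf_blocks u vs'
  else nseq (2 * (v - 1)) 1 ++ [:: 2].

Fixpoint run_lengths (v : nat) (vs : seq nat) : seq nat :=
  if vs is u :: vs' then 2 * v :: 2 :: run_lengths u vs' else [:: 2 * v].

Lemma flatten_markov_blocks (V : nat -> nat) k n :
  flatten [seq nseq (2 * (V i - 1)) 1 ++ (if i == k + n then [:: 2] else [:: 2; 2])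
          | i <- iota k n.+1] =
  cf_blocks (V k) [seq V i | i <- iota k.+1 n].
Proof.
elim: n k => [|n IHn] k; first by rewrite /= addn0 eqxx cats0.
rewrite (_ : iota k n.+2 = [:: k] ++ iota k.+1 n.+1) // map_cat flatten_cat -addSnnS IHn.
rewrite /= cats0 -catA; have -> // : (k == k.+1 + n) = false by apply/negbTE/eqP; lia.
Qed.

Lemma markov_cfE p q : 0 < p ->
  markov_cf p q = 2 :: cf_blocks (markov_v p q 1) [seq markov_v p q i | i <- iota 2 p.-1].
Proof.
by move=> p_gt0; rewrite /markov_cf -{2 3}(prednK p_gt0) -flatten_markov_blocks add1n prednK.
Qed.

Lemma cf_blocks_gt0 v vs : all (fun x => 0 < x) (cf_blocks v vs).
Proof. by elim: vs v => [|u vs IHvs] v; rewrite /= all_cat all_nseq /= ?IHvs orbT. Qed.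

Lemma horiz_pattern_ones b n a : horiz_pattern b (nseq n 1 ++ a) = nseq n b ++ horiz_pattern b a.
Proof. by elim: n => //= n IHn; rewrite !addbF IHn. Qed.

Lemma cons_nseq_cat (T : Type) (x : T) n s : x :: nseq n x ++ x :: s = nseq n.+2 x ++ s.
Proof. by elim: n => //= n [->]. Qed.

Lemma horiz_pattern_cf_blocks v vs : 0 < v -> all (fun u => 0 < u) vs ->
  false :: horiz_pattern false (cf_blocks v vs) = rcons (alt_signs false (run_lengths v vs)) true.
Proof.
elim: vs v => [|u vs IHvs] v v_gt0 /=; rewrite horiz_pattern_ones.
all: have -> : 2 * v = (2 * (v - 1)).+2 by lia.
  by rewrite [horiz_pattern _ _]/= cats0 cons_nseq_cat cats1.
case/andP=> u_gt0 vs_gt0; rewrite [horiz_pattern _ (_ :: _)]/= cons_nseq_cat.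
by rewrite rcons_cat /= -(IHvs u).
Qed.

Lemma size_run_lengths v vs : size (run_lengths v vs) = (2 * size vs).+1.
Proof. by elim: vs v => [|u vs IHvs] v //=; rewrite IHvs mulnS. Qed.

Lemma nth_run_lengths_even v vs k : k <= size vs ->
  nth 0 (run_lengths v vs) (2 * k) = 2 * nth 0 (v :: vs) k.
Proof. by elim: vs v k => [|u vs IHvs] v [|k] // le_k; rewrite mulnS add2n /= IHvs. Qed.

Lemma nth_run_lengths_odd v vs k : k < size vs -> nth 0 (run_lengths v vs) (2 * k).+1 = 2.
Proof. by elim: vs v k => [|u vs IHvs] v [|k] // lt_k; rewrite mulnS add2n /= IHvs. Qed.

Lemma run_lengths_gt0 v vs :
  all (fun u => 0 < u) (v :: vs) -> all (fun x => 0 < x) (run_lengths v vs).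
Proof.
elim: vs v => [|u vs IHvs] v /andP [v_gt0 vs_gt0] /=; rewrite muln_gt0 v_gt0 //=.
exact: IHvs.
Qed.

Lemma odd_sumn_run_lengths v vs : odd (sumn (run_lengths v vs)) = false.
Proof. by elim: vs v => [|u vs IHvs] v; rewrite /= !oddD ?IHvs; case: (odd v). Qed.

Lemma rev_run_lengths v vs : rev (v :: vs) = v :: vs -> rev (run_lengths v vs) = run_lengths v vs.
Proof.
move=> pal_vs; have size_runs := size_run_lengths v vs.
apply: (@eq_from_nth _ 0) => [|m]; first by rewrite size_rev.
rewrite size_rev size_runs => lt_m; rewrite nth_rev size_runs //.
have [k [m_k | m_k]] : exists k, m = 2 * k \/ m = (2 * k).+1.
  exists m./2; have := odd_double_half m; rewrite -mul2n.
  by case: (odd m) => /= ?; [right | left]; lia.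
- rewrite m_k in lt_m *; have le_k : k <= size vs by lia.
  rewrite (_ : _ - _ = 2 * (size vs - k)); last by lia.
  rewrite !nth_run_lengths_even ?leq_subr // -{1}pal_vs nth_rev /=; last by lia.
  by congr (2 * nth _ _ _); lia.
- rewrite m_k in lt_m *; have lt_k : k < size vs by lia.
  by rewrite (_ : _ - _ = (2 * (size vs - k.+1)).+1) ?nth_run_lengths_odd //; lia.
Qed.

Lemma count_even_iota n : count (fun m => ~~ odd m) (iota 0 (2 * n).+1) = n.+1.
Proof.
elim: n => // n IHn.
rewrite (_ : (2 * n.+1).+1 = (2 * n).+1 + 2) ?iotaD ?count_cat ?IHn; last by lia.
by rewrite /= oddM /=; lia.
Qed.

Lemma count_odd_iota n : count odd (iota 0 (2 * n).+1) = n.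
Proof.
have := count_predC odd (iota 0 (2 * n).+1).
by rewrite size_iota -[count (predC odd) _]/(count (fun m => ~~ odd m) _) count_even_iota; lia.
Qed.

Lemma seg_tiles_run rs m : m < size rs -> seg_tiles (psum rs m, psum rs m.+1) = (nth 0 rs m).+1.
Proof. by move=> lt_m; rewrite /seg_tiles /= psumS // addKn addn1. Qed.

Section MarkovSnakeGraph.

Variables p q : nat.
Hypotheses (p_gt0 : 0 < p) (p_lt_q : p < q) (coprime_pq : coprime p q).

Local Notation v1 := (markov_v p q 1).
Local Notation vs := [seq markov_v p q i | i <- iota 2 p.-1].

Definition markov_runs : seq nat := run_lengths v1 vs.

Definition markov_dirs : seq bool := alt_signs false markov_runs.

Lemma markov_widthsE : v1 :: vs = [seq markov_v p q i | i <- iota 1 p].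
Proof. by rewrite -[in iota 1 p](prednK p_gt0). Qed.

Lemma mem_markov_widths v : v \in v1 :: vs -> exists2 i, 0 < i <= p & v = markov_v p q i.
Proof. by rewrite markov_widthsE => /mapP [i]; rewrite mem_iota add1n ltnS => ? ->; exists i. Qed.

Lemma markov_widths_gt0 : all (fun v => 0 < v) (v1 :: vs).
Proof. by apply/allP => v /mem_markov_widths [i le_ip ->]; apply: markov_v_gt0. Qed.

Lemma rev_markov_widths : rev (v1 :: vs) = v1 :: vs.
Proof.
rewrite markov_widthsE; apply: (@eq_from_nth _ 0) => [|k]; first by rewrite size_rev.
rewrite size_rev size_map size_iota => lt_kp.
rewrite nth_rev ?size_map ?size_iota // !(nth_map 0) ?size_iota ?nth_iota; try lia.
by rewrite -markov_v_sym //; [congr markov_v | ]; lia.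
Qed.

Lemma markov_runs_gt0 : all (fun x => 0 < x) markov_runs.
Proof. exact: run_lengths_gt0 markov_widths_gt0. Qed.

Lemma size_markov_runs : size markov_runs = (2 * (p - 1)).+1.
Proof. by rewrite size_run_lengths size_map size_iota subn1. Qed.

Lemma horiz_pattern_markov_cf : horiz_pattern true (markov_cf p q) = horiz_edges markov_dirs true.
Proof.
have /andP [v1_gt0 vs_gt0] := markov_widths_gt0.
by rewrite markov_cfE //= horiz_pattern_cf_blocks.
Qed.

Lemma markov_dirs_snakeG : is_snakeG (markov_cf p q) markov_dirs.
Proof.
apply: (@horiz_is_snakeG _ _ true).
- by rewrite markov_cfE //= cf_blocks_gt0.
- by rewrite -(size_horiz_pattern true) horiz_pattern_markov_cf size_horiz_edges.
- by rewrite horiz_pattern_markov_cf.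
Qed.

Lemma snakeG_markov_dirs dirs : is_snakeG (markov_cf p q) dirs -> dirs = markov_dirs.
Proof.
case/snakeG_horiz_edges => lastN; rewrite horiz_pattern_markov_cf.
by case=> /rcons_inj [].
Qed.

Lemma markov_dirs_rot_symmetric : rot_symmetric_at_tile markov_dirs.
Proof.
apply: pal_rot_symmetric; last by rewrite size_alt_signs odd_sumn_run_lengths.
rewrite /markov_dirs rev_alt_signs /markov_runs size_run_lengths /= negbK oddM.
by rewrite rev_run_lengths //; apply: rev_markov_widths.
Qed.

Lemma size_markov_segments b :
  size (segments b markov_dirs) = count (fun m => odd m == b) (iota 0 (size markov_runs)).
Proof.
by rewrite (perm_size (perm_segments_alt_signs false markov_runs_gt0 b)) size_map size_filter.
Qed.

Lemma size_markov_hsegments : size (hsegments markov_dirs) = p.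
Proof.
rewrite /hsegments size_markov_segments size_markov_runs.
rewrite (eq_count (a2 := fun m => ~~ odd m)) => [|m]; last exact: eqbF_neg.
by rewrite count_even_iota subn1 prednK.
Qed.

Lemma size_markov_vsegments : size (vsegments markov_dirs) = p - 1.
Proof.
rewrite /vsegments size_markov_segments size_markov_runs.
by rewrite (eq_count (a2 := odd)) ?count_odd_iota // => m; rewrite eqb_id.
Qed.

Lemma mem_markov_segments b jk : jk \in segments b markov_dirs ->
  exists2 m, (m < size markov_runs) && (odd m == b) & seg_tiles jk = (nth 0 markov_runs m).+1.
Proof.
rewrite (perm_mem (perm_segments_alt_signs false markov_runs_gt0 b)).
case/mapP=> m; rewrite mem_filter mem_iota add0n /= => /andP [odd_m lt_m] ->.
by exists m; [rewrite lt_m | rewrite seg_tiles_run].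
Qed.

Lemma seg_tiles_markov_vsegments jk : jk \in vsegments markov_dirs -> seg_tiles jk = 3.
Proof.
case/mem_markov_segments => m /andP [lt_m /eqP odd_m] ->.
have m_k : m = (2 * m./2).+1 by rewrite -[LHS]odd_double_half odd_m -mul2n.
have lt_k : m./2 < size vs by move: lt_m; rewrite size_markov_runs size_map size_iota; lia.
by rewrite m_k nth_run_lengths_odd.
Qed.

Lemma seg_tiles_markov_hsegments jk : jk \in hsegments markov_dirs ->
  exists2 i, 0 < i <= p & seg_tiles jk = 2 * (markov_v p q i - 1) + 3.
Proof.
case/mem_markov_segments => m /andP [lt_m /eqP even_m] ->.
have m_k : m = 2 * m./2 by rewrite -[LHS]odd_double_half even_m -mul2n.
have le_k : m./2 <= size vs by move: lt_m; rewrite size_markov_runs size_map size_iota; lia.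
have v_in : nth 0 (v1 :: vs) m./2 \in v1 :: vs by apply: mem_nth.
have [i le_ip v_i] := mem_markov_widths v_in; exists i => //.
have := markov_v_gt0 p_gt0 p_lt_q coprime_pq le_ip.
by rewrite /markov_runs m_k nth_run_lengths_even // v_i; lia.
Qed.

End MarkovSnakeGraph.

Theorem corollary4p2 (p q : nat) :
  0 < p -> p < q -> coprime p q ->
  (exists dirs, is_snakeG (markov_cf p q) dirs) /\
  forall dirs, is_snakeG (markov_cf p q) dirs ->
    [/\ rot_symmetric_at_tile dirs,
        size (hsegments dirs) = p /\
        (exists nu : nat -> nat,
            [/\ forall i, i < p -> 0 < nu i,
                forall i j, i < p -> j < p -> i != j ->
                  (nu i <= nu j + 1) && (nu j <= nu i + 1)
              & forall i, i < p ->
                  seg_tiles (nth (0, 0) (hsegments dirs) i) = 2 * (nu i - 1) + 3])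
      & size (vsegments dirs) = p - 1 /\
        (forall jk, jk \in vsegments dirs -> seg_tiles jk = 3)].
Proof.
move=> p_gt0 p_lt_q coprime_pq.
split; first by exists (markov_dirs p q); apply: markov_dirs_snakeG.
move=> dirs /snakeG_markov_dirs -> //; set hsegs := hsegments (markov_dirs p q).
have hseg_width i : i < p ->
    exists2 k, 0 < k <= p & seg_tiles (nth (0, 0) hsegs i) = 2 * (markov_v p q k - 1) + 3.
  by move=> lt_ip; apply: seg_tiles_markov_hsegments; rewrite // mem_nth ?size_markov_hsegments.
have width_gt0 k := markov_v_gt0 p_gt0 p_lt_q coprime_pq (i := k).
have width_bounds k := markov_v_bounds p_gt0 p_lt_q coprime_pq (i := k).
split; [exact: markov_dirs_rot_symmetric | split | split].
- exact: size_markov_hsegments.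
- exists (fun i => (seg_tiles (nth (0, 0) hsegs i) - 1) %/ 2); split.
  + by move=> i /hseg_width [k /width_gt0 v_gt0 ->]; lia.
  + move=> i j /hseg_width [k /width_bounds/andP [lo hi] ->].
    move=> /hseg_width [l /width_bounds/andP [lo' hi'] ->] _.
    by apply/andP; split; lia.
  + by move=> i /hseg_width [k _ ->]; lia.
- exact: size_markov_vsegments.
- exact: seg_tiles_markov_vsegments.
Qed.
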